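(* Let $\alpha_1,\alpha_2$ be distinct closed cells of $\widetilde{V}_1$ whose intersection $\alpha=\alpha_1\cap\alpha_2$ is a common face. Then $N^\circ_{\alpha_1}\cap N^\circ_{\alpha_2}=N^\circ_{\alpha}$.
   Context: Let $\widetilde{W}$ be the well-rounded retract for $\mathrm{SL}_4$: the set of positive definite real symmetric $4\times4$ matrices $A$ with $\min\{xAx^t: x\in\mathbb{Z}^4\setminus\{0\}\}=1$ whose minimal vectors span $\mathbb{R}^4$; it is a locally finite regular cell complex with convex closed cells, and with respect to a fixed triangulation its first barycentric subdivision is a simplicial complex. Let $\sigma$ be the $6$-cell whose minimal vectors are $\pm e_1,\dots,\pm e_4$, let $\mathrm{Sp}_4(\mathbb{Z})$ be the integer matrices $g$ with $g\Omega g^t=\Omega$ for $\Omega$ with rows $(0,0,0,1),(0,0,1,0),(0,-1,0,0),(-1,0,0,0)$, acting by $A\mapsto \gamma A\gamma^t$, and let $\widetilde{V}_1=\bigcup_{\gamma\in\mathrm{Sp}_4(\mathbb{Z})}\gamma\cdot\sigma$, viewed as a simplicial subcomplex of the first barycentric subdivision of $\widetilde{W}$. For a simplicial complex $K$ and a vertex $v$, $\overline{\mathrm{star}}(v;K)$ is the closure of the set of simplices having $v$ as a face; for a full subcomplex $K_0$ (no simplex of $K\setminus K_0$ has all vertices in $K_0$), $N(K_0;K)=\bigcup_{v\text{ vertex of }K_0}\overline{\mathrm{star}}(v;K)$. Writing $K^{(2)}$ for the second barycentric subdivision, for each closed cell $\alpha$ of $\widetilde{V}_1$ let $N_\alpha=|N(\alpha^{(2)};\widetilde{V}_1^{(2)})|$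 (the second derived neighborhood of $\alpha$) and $N^\circ_\alpha$ its interior. *)

From HB Require Import structures.
From mathcomp Require Import all_boot all_order all_algebra.
From mathcomp Require Import boolp classical_sets reals.
From Stdlib Require List.
Set Implicit Arguments. Unset Strict Implicit. Unset Printing Implicit Defensive.
Import Order.TTheory GRing.Theory Num.Theory.
Local Open Scope ring_scope.
Local Open Scope classical_set_scope.

Section WR.
Variable R : realType.
Notation M := 'M[R]_4.

Definition toR (m n : nat) (x : 'M[int]_(m, n)) : 'M[R]_(m, n) :=
  map_mx (fun z : int => z%:~R) x.

Definition qf (A : M) (x : 'rV[R]_4) : R := (x *m A *m x^T) 0 0.

Definition symmetric (A : M) : Prop := A^T = A.
Definition posdef (A : M) : Prop :=
  symmetric A /\ forall x : 'rV[R]_4, x != 0 -> 0 < qf A x.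

(* minimal vectors (for A with arithmetic minimum 1) *)
Definition Min (A : M) : set 'rV[int]_4 :=
  [set x | x != 0 /\ qf A (toR x) = 1].

Definition inW (A : M) : Prop :=
  posdef A /\
  (forall x : 'rV[int]_4, x != 0 -> 1 <= qf A (toR x)) /\
  (* the minimal vectors span R^4: four of them are linearly independent *)
  (exists B : 'M[int]_4, (forall i, Min A (row i B)) /\ \det (toR B) != 0).

Definition cellof (S : set 'rV[int]_4) : set M :=
  [set A | inW A /\ S `<=` Min A].

Definition cell (a : set M) : Prop :=
  exists A0, inW A0 /\ a = cellof (Min A0).

(* points of the open cell (relative interior) of a closed cell a *)
Definition opencell (a : set M) : set M :=
  [set A | inW A /\ a = cellof (Min A)].

Definition sigma : set M :=
  cellof [set x | exists i : 'I_4, x = delta_mx 0 i \/ x = - delta_mx 0 i].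

Definition Omega : 'M[int]_4 :=
  \matrix_(i, j) (if (i + j == 3)%N then (if (i < j)%N then 1 else -1) else 0).
Definition Sp4Z (g : 'M[int]_4) : Prop := g *m Omega *m g^T = Omega.

Definition act (g : 'M[int]_4) (A : M) : M := toR g *m A *m (toR g)^T.

Definition V1 : set M :=
  [set A | exists g, Sp4Z g /\ (act g @` sigma) A].

Definition cellV1 (a : set M) : Prop :=
  cell a /\ exists g, Sp4Z g /\ a `<=` act g @` sigma.

(* a simplex = nonempty chain of cells of V~_1, listed increasingly *)
Definition psub (T : Type) (a c : set T) : Prop := a `<=` c /\ a <> c.

Definition K1simplex (s : seq (set M)) : Prop :=
  s <> [::] /\ (forall a, List.In a s -> cellV1 a) /\
  (forall i j, (i < j < size s)%N -> psub (nth set0 s i) (nth set0 s j)).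

(* t is a face of the chain s *)
Definition subchain (t s : seq (set M)) : Prop := forall a, List.In a t -> List.In a s.
Definition psubchain (t s : seq (set M)) : Prop := subchain t s /\ ~ subchain s t.

(* geometric position of a vertex of the second subdivision: barycenter of
   a simplex of the first one, whose vertices are the chosen points b a *)
Definition bary1 (b : set M -> M) (s : seq (set M)) : M :=
  (size s)%:R^-1 *: \sum_(a <- s) b a.

Definition K2simplex (C : seq (seq (set M))) : Prop :=
  C <> [::] /\ (forall s, List.In s C -> K1simplex s) /\
  (forall i j, (i < j < size C)%N -> psubchain (nth [::] C i) (nth [::] C j)).

Definition hull (ps : seq M) : set M :=
  [set x | exists t : 'I_(size ps) -> R,
     (forall i, 0 <= t i) /\ \sum_i t i = 1 /\
     x = \sum_i t i *: nth 0 ps i].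

(* s is a simplex of the first subdivision lying in the cell a,
   i.e. a vertex of a^(2) *)
Definition in_cell (s : seq (set M)) (a : set M) : Prop :=
  forall c, List.In c s -> c `<=` a.

(* N_a = |N(a^(2); V~_1^(2))| : union of the closed stars in V~_1^(2)
   of the vertices of a^(2) *)
Definition Nbhd (b : set M -> M) (a : set M) : set M :=
  [set x | exists C, K2simplex C /\
     (exists s, List.In s C /\ in_cell s a) /\
     hull (map (bary1 b) C) x].

(* interior of N relative to |V~_1^(2)| = |V~_1| (sup metric on entries) *)
Definition relint (N : set M) : set M :=
  [set x | N x /\ exists e : R, 0 < e /\
     forall y, V1 y -> (forall i j, `|y i j - x i j| < e) -> N y].

Definition Nint (b : set M -> M) (a : set M) : set M := relint (Nbhd b a).

End WR.

(* A point x of |V~_1| has unique barycentric coordinates in the first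
   subdivision.  If x = sum_c w_c b(c) along a chain of cells, with total weight
   S, then b(l)[v] >= 1 for every nonzero integral v, with equality on the
   minimal vectors of c whenever l is contained in c; so the top cell c of
   positive weight is the cell whose minimal vectors are the nonzero v with
   x[v] = S.
   Evaluating x at a vector minimal for the next smaller cell but not for c
   determines w_c, and c can be peeled off.
   Coordinates t of x in a simplex C_0 < ... < C_n of the second subdivision
   induce such first-subdivision weights, and these are maximal exactly on the
   first chain C_k with t_k > 0.  Hence C_k, and its least cell e, depend only
   on x.  If C has a vertex in a then e lies in a, and x lies in the closed star
   of the vertex [e] (or of C_k = [e]) of a^(2).  Thus N_a1 and N_a2 meet inside
   N_(a1 & a2); relative interiors commute with finite intersections, and the
   reverse inclusion is monotonicity. *)

From HB Require Import structures.
From mathcomp Require Import all_boot all_order all_algebra.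
From mathcomp Require Import boolp classical_sets reals.
From mathcomp Require Import lra.
Set Implicit Arguments. Unset Strict Implicit. Unset Printing Implicit Defensive.
Local Open Scope classical_set_scope.
Local Open Scope ring_scope.
Import Order.TTheory GRing.Theory Num.Theory.


Lemma InP (T : eqType) (x : T) (s : seq T) : reflect (List.In x s) (x \in s).
Proof.
elim: s => [|y s IH]; first by constructor.
rewrite in_cons; apply: (iffP orP) => [[/eqP ->|/IH]|[->|/IH]]; by [left|right|left].
Qed.

Section StrictChain.
Variable T : Type.
Implicit Types (L r : seq (set T)) (c l : set T).

Definition strict_chain L : Prop :=
  forall i j, (i < j < size L)%N -> psub (nth set0 L i) (nth set0 L j).

Lemma strict_chain_uniq L : strict_chain L -> uniq L.
Proof.
move=> H; apply/(uniqP set0) => i j /[!inE] iL jL Eij.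
by case: (ltngtP i j) => [ij|ji|//]; [case: (H i j) | case: (H j i)];
  rewrite ?ij ?ji ?iL ?jL ?Eij.
Qed.

Lemma strict_chain_le L i j : strict_chain L -> (i <= j < size L)%N ->
  nth set0 L i `<=` nth set0 L j.
Proof.
move=> H /andP[]; rewrite leq_eqVlt => /orP[/eqP -> _|ij jL]; first exact: subset_refl.
by case: (H i j); rewrite ?ij ?jL.
Qed.

Lemma strict_chain_head L c : strict_chain L -> c \in L -> nth set0 L 0 `<=` c.
Proof.
by move=> H cL; rewrite -(nth_index set0 cL); apply: strict_chain_le; rewrite ?index_mem.
Qed.

Lemma strict_chain_rcons r c : strict_chain (rcons r c) ->
  strict_chain r /\ {in r, forall l, psub l c}.
Proof.
move=> H; split=> [i j /andP[ij jr] | l lr].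
  have := H i j; rewrite size_rcons !nth_rcons jr (ltn_trans ij jr) ij.
  by apply; apply: ltn_trans jr _.
have := H (index l r) (size r).
by rewrite size_rcons ltnSn !nth_rcons index_mem lr ltnn eqxx nth_index //; apply.
Qed.

Lemma strict_chain_sub_last r c : strict_chain (rcons r c) ->
  {in rcons r c, forall l, l `<=` c}.
Proof.
move=> /strict_chain_rcons[_ rc] l; rewrite mem_rcons in_cons.
by case/orP=> [/eqP -> | /rc[]//]; apply: subset_refl.
Qed.

End StrictChain.

Section WellRoundedCells.
Variable R : realType.
Local Notation M := 'M[R]_4.
Implicit Types (A B : M) (a c : set M) (v : 'rV[int]_4).

Lemma qf_sum (I : Type) (L : seq I) (w : I -> R) (F : I -> M) y :
  qf (\sum_(l <- L) w l *: F l) y = \sum_(l <- L) w l * qf (F l) y.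
Proof.
rewrite /qf mulmx_sumr mulmx_suml summxE; apply: eq_bigr => l _.
by rewrite -scalemxAr -scalemxAl mxE.
Qed.

Lemma inW_qf_ge1 A v : inW A -> v != 0 -> 1 <= qf A (toR R v).
Proof. by case=> _ [+ _]; apply. Qed.

Lemma inW_qf_gt1 A v : inW A -> v != 0 -> ~ Min A v -> 1 < qf A (toR R v).
Proof.
move=> WA v0 nMv; rewrite lt_neqAle inW_qf_ge1 // andbT.
by apply/eqP => qv; apply: nMv.
Qed.

Lemma opencell_mem a A : opencell a A -> a A.
Proof. by case=> WA ->; split. Qed.

Lemma opencell_Min_sub a c A B : opencell a A -> opencell c B -> a `<=` c ->
  Min B `<=` Min A.
Proof. by move=> /opencell_mem aA [_ cE] /(_ A aA); rewrite cE => -[]. Qed.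

Lemma opencell_Min_inj a c A B : opencell a A -> opencell c B -> Min A = Min B ->
  a = c.
Proof. by case=> _ -> [_ ->] ->. Qed.

Lemma opencell_Min_proper a c A B : opencell a A -> opencell c B -> psub a c ->
  exists v, Min A v /\ ~ Min B v.
Proof.
move=> oa oc [ac neq_ac]; apply: contrapT => MA_MB; apply/neq_ac/(opencell_Min_inj oa oc).
apply/seteqP; split; last exact: opencell_Min_sub oa oc ac.
by move=> v MAv; apply: contrapT => nMBv; apply: MA_MB; exists v.
Qed.

End WellRoundedCells.

Section FirstSubdivision.
Variable R : realType.
Local Notation M := 'M[R]_4.
Variable b : set M -> M.
Implicit Types (L r : seq (set M)) (c l : set M) (w : set M -> R) (x : M).
Implicit Types (v : 'rV[int]_4).

Definition barycentric L w x : Prop :=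
  [/\ strict_chain L, {in L, forall c, opencell c (b c)},
      (forall c, 0 <= w c), (forall c, c \notin L -> w c = 0)
    & x = \sum_(c <- L) w c *: b c].

Lemma sum_le_sum_qf L w v : {in L, forall l, opencell l (b l)} ->
  (forall c, 0 <= w c) -> v != 0 ->
  \sum_(l <- L) w l <= \sum_(l <- L) w l * qf (b l) (toR R v).
Proof.
move=> cells w0 v0; rewrite !big_seq; apply: ler_sum => l lL.
by rewrite -{1}(mulr1 (w l)) ler_wpM2l // (inW_qf_ge1 (cells l lL).1).
Qed.

Lemma sum_qf_Min L w c v : {in L, forall l, opencell l (b l)} ->
  {in L, forall l, l `<=` c} -> opencell c (b c) -> Min (b c) v ->
  \sum_(l <- L) w l * qf (b l) (toR R v) = \sum_(l <- L) w l.
Proof.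
move=> cells below oc Mv; rewrite !big_seq; apply: eq_bigr => l lL.
by have [_ ->] := opencell_Min_sub (cells l lL) oc (below l lL) Mv; rewrite mulr1.
Qed.

Lemma barycentric_top_MinE r c w x v : barycentric (rcons r c) w x -> 0 < w c ->
  Min (b c) v <-> v != 0 /\ qf x (toR R v) = \sum_(l <- rcons r c) w l.
Proof.
move=> [ch cells w0 _ ->] wc_gt0.
have oc : opencell c (b c) by apply: cells; rewrite mem_rcons mem_head.
rewrite qf_sum; split=> [Mv | [v0]].
  by split; [case: Mv | apply: sum_qf_Min Mv => //; apply: strict_chain_sub_last].
apply: contraPP => nMv; rewrite !big_rcons /=.
have cells_r : {in r, forall l, opencell l (b l)}.
  by move=> l /(mem_subseq (subseq_rcons _ _)) /cells.
have := sum_le_sum_qf cells_r w0 v0; have := inW_qf_gt1 oc.1 v0 nMv.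
set q := qf _ _ => q_gt1 le_r.
have : w c < w c * q by rewrite -{1}(mulr1 (w c)) ltr_pM2l.
lra.
Qed.

Lemma barycentric_top_weight_le r r' c w w' x :
  barycentric (rcons r c) w x -> barycentric (rcons r' c) w' x ->
  \sum_(l <- rcons r c) w l = \sum_(l <- rcons r' c) w' l -> w' c <= w c.
Proof.
move=> [ch cells w0 _ xE] [_ cells' w0' _ xE']; rewrite !big_rcons /=.
case/lastP: r => [|r0 cr] in ch cells xE *.
  by rewrite big_nil add0r => ->; rewrite lerDr sumr_ge0.
have oc : opencell c (b c) by apply: cells; rewrite mem_rcons mem_head.
have cr_r : cr \in rcons r0 cr by rewrite mem_rcons mem_head.
have ocr := cells cr (mem_subseq (subseq_rcons _ c) cr_r).
have [ch_r /(_ cr cr_r) cr_c] := strict_chain_rcons ch.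
(* [v] is minimal for every cell of [rcons r0 cr] but not for [c], so [x] at [v]
   isolates the weight of [c]. *)
have [v [Mv nMv]] := opencell_Min_proper ocr oc cr_c.
have v0 : v != 0 by case: Mv.
have q_gt1 := inW_qf_gt1 oc.1 v0 nMv.
have E : qf x (toR R v) = \sum_(l <- rcons r0 cr) w l + w c * qf (b c) (toR R v).
  rewrite xE qf_sum big_rcons /=; congr (_ + _); apply: sum_qf_Min Mv => //.
    by move=> l /(mem_subseq (subseq_rcons _ _)) /cells.
  exact: strict_chain_sub_last ch_r.
have E' : \sum_(l <- r') w' l + w' c * qf (b c) (toR R v) <= qf x (toR R v).
  rewrite xE' qf_sum big_rcons /= lerD2r; apply: sum_le_sum_qf w0' v0.
  by move=> l /(mem_subseq (subseq_rcons _ _)) /cells'.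
move: E E'; set q := qf (b c) _ => E E' S; rewrite leNgt; apply/negP => lt_w.
have : 0 < (w' c - w c) * (q - 1) by rewrite mulr_gt0 // subr_gt0.
lra.
Qed.

Lemma barycentric_rcons0 r c w x : barycentric (rcons r c) w x -> w c = 0 ->
  barycentric r w x.
Proof.
case=> /strict_chain_rcons[ch _] cells w0 wout xE wc0; split=> //.
- by move=> l /(mem_subseq (subseq_rcons _ _)) /cells.
- move=> l; have [-> //|lc lr] := eqVneq l c.
  by apply: wout; rewrite mem_rcons in_cons negb_or lc.
- by rewrite xE big_rcons /= wc0 scale0r addr0.
Qed.

Lemma barycentric_peel r c w x : barycentric (rcons r c) w x ->
  let w_r l := if l == c then 0 else w l in
  barycentric r w_r (x - w c *: b c) /\
  \sum_(l <- r) w_r l = \sum_(l <- rcons r c) w l - w c.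
Proof.
move=> [ch cells w0 wout xE] w_r.
have cr : c \notin r by move: (strict_chain_uniq ch); rewrite rcons_uniq => /andP[].
have w_rE (V : zmodType) (F : set M -> V) :
    \sum_(l <- r) (if l == c then 0 else F l) = \sum_(l <- r) F l.
  by apply: eq_big_seq => l lr; case: eqP => // lc; rewrite -lc lr in cr.
split; last by rewrite w_rE big_rcons /= addrK.
split.
- by case: (strict_chain_rcons ch).
- by move=> l /(mem_subseq (subseq_rcons _ _)) /cells.
- by move=> l; rewrite /w_r; case: eqP.
- move=> l lr; rewrite /w_r; case: eqP => // /eqP lc.
  by apply: wout; rewrite mem_rcons in_cons negb_or lc.
- rewrite xE big_rcons /= addrK -(w_rE _ (fun l => w l *: b l)).
  by apply: eq_bigr => l _; rewrite /w_r; case: eqP; rewrite ?scale0r.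
Qed.

Lemma barycentric_nil L w w' x : barycentric [::] w x -> barycentric L w' x ->
  \sum_(l <- L) w' l = 0 -> w =1 w'.
Proof.
case=> _ _ _ wout _ [_ _ w0' wout' _] /eqP; rewrite psumr_eq0 // => /allP w'0 c.
rewrite wout //; have [/w'0/eqP -> //|cL] := boolP (c \in L).
by rewrite wout'.
Qed.

Lemma barycentric_unique L L' w w' x :
  barycentric L w x -> barycentric L' w' x ->
  \sum_(l <- L) w l = \sum_(l <- L') w' l -> w =1 w'.
Proof.
elim/last_ind: L w x L' w' => [|r c IHr] w x L' w' bx bx' S.
  by apply: barycentric_nil bx bx' _; rewrite -S big_nil.
elim/last_ind: L' w' bx' S => [|r' c' IHr'] w' bx' S.
  by have := barycentric_nil bx' bx; rewrite S big_nil => /(_ erefl) E l; rewrite E.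
have [_ _ w0 _ _] := bx; have [_ _ w0' _ _] := bx'.
have /predU1P[wc0|wc_gt0] : (w c == 0) || (0 < w c) by rewrite -le0r.
  apply: IHr (barycentric_rcons0 bx wc0) bx' _.
  by rewrite -S big_rcons /= wc0 addr0.
have /predU1P[wc0'|wc_gt0'] : (w' c' == 0) || (0 < w' c') by rewrite -le0r.
  apply: IHr' (barycentric_rcons0 bx' wc0') _.
  by rewrite S big_rcons /= wc0' addr0.
have cc' : c = c'.
  have [_ cells _ _ _] := bx; have [_ cells' _ _ _] := bx'.
  apply: opencell_Min_inj (cells c _) (cells' c' _) _; rewrite ?mem_rcons ?mem_head //.
  apply/seteqP; split=> v.
    by move/(barycentric_top_MinE _ bx wc_gt0); rewrite S => /(barycentric_top_MinE _ bx' wc_gt0').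
  by move/(barycentric_top_MinE _ bx' wc_gt0'); rewrite -S => /(barycentric_top_MinE _ bx wc_gt0).
subst c'.
have wc : w c = w' c.
  apply/eqP; rewrite eq_le (barycentric_top_weight_le bx bx' S).
  by rewrite (barycentric_top_weight_le bx' bx (esym S)).
have [bx_r S_r] := barycentric_peel bx; have [bx'_r S'_r] := barycentric_peel bx'.
rewrite wc in bx_r S_r; have := IHr _ _ _ _ bx_r bx'_r; rewrite S_r S'_r S => /(_ erefl) E l.
by have := E l; case: eqP => [->|].
Qed.

End FirstSubdivision.

Lemma sumr_ord_drop (V : zmodType) n k (F : nat -> V) : (k <= n)%N ->
  (forall i, (i < k)%N -> F i = 0) -> \sum_(i < n) F i = \sum_(i < n - k) F (k + i)%N.
Proof.
move=> kn F0; rewrite -!(big_mkord xpredT) (big_cat_nat (n := k)) //=.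
rewrite big_nat_cond big1 ?add0r => [|i /andP[/andP[_ ik] _]]; last exact: F0.
by rewrite -{1}(add0n k) big_addn big_mkord; apply: eq_bigr => i _; rewrite addnC.
Qed.

Lemma big_mem_restrict (T : eqType) (V : zmodType) (s s' : seq T) (F : T -> V) :
  uniq s -> {subset s <= s'} -> uniq s' ->
  \sum_(c <- s') (if c \in s then F c else 0) = \sum_(c <- s) F c.
Proof.
move=> us ss' us'; rewrite -big_mkcond -big_filter; apply/perm_big/uniq_perm => //.
  exact: filter_uniq.
by move=> c; rewrite mem_filter andb_idr //; apply: ss'.
Qed.

Definition first_pos (R : numDomainType) (t : nat -> R) n k : Prop :=
  [/\ (k < n)%N, 0 < t k & forall i, (i < k)%N -> t i = 0].

Lemma exists_first_pos (R : numDomainType) n (t : nat -> R) :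
  (forall i, 0 <= t i) -> \sum_(i < n) t i != 0 -> exists k, first_pos t n k.
Proof.
move=> t0 /eqP /psumr_neq0P[// | j /= tj].
have ex : exists k, (k < n)%N && (0 < t k) by exists j; rewrite ltn_ord tj.
case: (ex_minnP ex) => k /andP[kn tk] k_min; exists k; split=> // i ik.
have /predU1P[// | ti] : (t i == 0) || (0 < t i) by rewrite -le0r.
by have := k_min i; rewrite ti (ltn_trans ik kn) leqNgt ik => /(_ erefl).
Qed.

Section SecondSubdivision.
Variable R : realType.
Local Notation M := 'M[R]_4.
Variable b : set M -> M.
Hypothesis hb : forall a, cellV1 a -> opencell a (b a).
Implicit Types (C : seq (seq (set M))) (s : seq (set M)) (a c e : set M).
Implicit Types (t : nat -> R) (x : M).

Definition hull_coords C t x : Prop :=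
  [/\ forall i, 0 <= t i, \sum_(i < size C) t i = 1
    & x = \sum_(i < size C) t i *: bary1 b (nth [::] C i)].

Lemma hull_map_bary1 C x : hull (map (bary1 b) C) x <-> exists t, hull_coords C t x.
Proof.
have sizeE (V : zmodType) (F : nat -> V) :
    \sum_(i < size (map (bary1 b) C)) F i = \sum_(i < size C) F i.
  by rewrite -!(big_mkord xpredT) size_map.
have nthE i : nth 0 (map (bary1 b) C) i = bary1 b (nth [::] C i).
  case: (ltnP i (size C)) => iC; first by rewrite (nth_map [::]).
  by rewrite !nth_default ?size_map // /bary1 big_nil scaler0.
split=> [[t [t0 [t1 xE]]] | [t [t0 t1 xE]]].
- pose t' i := odflt 0 (omap t (insub i)); exists t'.
  have t'E j : t' (val j) = t j by rewrite /t' valK.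
  split; first by move=> i; rewrite /t'; case: insub.
  + by rewrite -(sizeE _ t') -t1; apply: eq_bigr => j _; rewrite t'E.
  + rewrite xE -(sizeE _ (fun i => t' i *: bary1 b (nth [::] C i))).
    by apply: eq_bigr => j _; rewrite t'E nthE.
- exists (fun j => t j); split=> //; split; first by rewrite (sizeE _ t).
  rewrite xE (sizeE _ (fun i => t i *: nth 0 (map (bary1 b) C) i)).
  by apply: eq_bigr => i _; rewrite nthE.
Qed.

Lemma NbhdE a x : Nbhd b a x <->
  exists C t, [/\ K2simplex C, exists2 s, List.In s C & in_cell s a & hull_coords C t x].
Proof.
split=> [[C [K [[s [sC sa]] /hull_map_bary1[t hx]]]] | [C [t [K [s sC sa] hx]]]].
  by exists C, t; split=> //; exists s.
by exists C; split=> //; split; [exists s | apply/hull_map_bary1; exists t].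
Qed.

Lemma K1simplex_size s : K1simplex s -> (0 < size s)%N.
Proof. by case; case: s. Qed.

Lemma K1simplex_opencell s : K1simplex s -> {in s, forall c, opencell c (b c)}.
Proof. by case=> _ [cells _] c /InP /cells /hb. Qed.

Lemma K1simplex_chain s : K1simplex s -> strict_chain s.
Proof. by case=> _ []. Qed.

Lemma K1simplex_head s : K1simplex s -> nth set0 s 0 \in s.
Proof. by move/K1simplex_size; apply: mem_nth. Qed.

Lemma K2simplex_nth C i : K2simplex C -> (i < size C)%N -> K1simplex (nth [::] C i).
Proof. by case=> _ [K1 _] iC; apply/K1/InP/mem_nth. Qed.

Lemma K2simplex_sub C i j : K2simplex C -> (i <= j < size C)%N ->
  {subset nth [::] C i <= nth [::] C j}.
Proof.
case=> _ [_ H] /andP[]; rewrite leq_eqVlt => /orP[/eqP -> _ c //|ij jC c].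
have [|sub _] := H i j; first by rewrite ij jC.
by move/InP/sub/InP.
Qed.

Lemma K2simplex_size C : K2simplex C -> (0 < size C)%N.
Proof. by case; case: C. Qed.

Lemma K2simplex_last C : K2simplex C -> K1simplex (last [::] C).
Proof.
by move=> K; rewrite -nth_last; apply: (K2simplex_nth K); rewrite prednK ?K2simplex_size.
Qed.

Lemma K2simplex_sub_last C i : K2simplex C -> (i < size C)%N ->
  {subset nth [::] C i <= last [::] C}.
Proof.
move=> K iC; rewrite -nth_last; apply: (K2simplex_sub K).
by case: (size C) iC => // n; rewrite ltnS => -> /=.
Qed.

Definition induced_weight C t c : R :=
  \sum_(i < size C) t i *
    (if c \in nth [::] C i then (size (nth [::] C i))%:R^-1 else 0).

Lemma sum_induced_weight (V : lmodType R) C t (F : set M -> V) : K2simplex C ->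
  \sum_(c <- last [::] C) induced_weight C t c *: F c =
  \sum_(i < size C) t i *: ((size (nth [::] C i))%:R^-1 *: \sum_(c <- nth [::] C i) F c).
Proof.
move=> K; rewrite /induced_weight; under eq_bigr do rewrite scaler_suml.
rewrite exchange_big /=; apply: eq_bigr => i _.
have uniq_i := strict_chain_uniq (K1simplex_chain (K2simplex_nth K (ltn_ord i))).
have uniq_last := strict_chain_uniq (K1simplex_chain (K2simplex_last K)).
rewrite scaler_sumr -(big_mem_restrict _ uniq_i (K2simplex_sub_last K (ltn_ord i)) uniq_last).
rewrite scaler_sumr; apply: eq_bigr => c _.
by case: ifP; rewrite ?mulr0 ?scale0r ?scaler0 // scalerA.
Qed.

Lemma barycentric_induced C t x : K2simplex C -> hull_coords C t x ->
  barycentric b (last [::] C) (induced_weight C t) x /\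
  \sum_(c <- last [::] C) induced_weight C t c = 1.
Proof.
move=> K [t0 t1 xE]; have Klast := K2simplex_last K; split; last first.
  have := sum_induced_weight t (fun=> (1 : R^o)) K.
  rewrite (eq_bigr _ (fun c _ => mulr1 _)) => ->; rewrite -[RHS]t1.
  apply: eq_bigr => i _; rewrite big_const_seq count_predT iter_addr_0.
  have size_gt0 := K1simplex_size (K2simplex_nth K (ltn_ord i)).
  change (t i * ((size (nth [::] C i))%:R^-1 * (size (nth [::] C i))%:R) = t i).
  by rewrite mulVf ?mulr1 // pnatr_eq0 -lt0n.
split.
- exact: K1simplex_chain.
- exact: K1simplex_opencell.
- move=> c; apply: sumr_ge0 => i _; apply: mulr_ge0 => //.
  by case: ifP => // _; rewrite invr_ge0.
- move=> c c_last; apply: big1 => i _.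
  by case: ifP => [/(K2simplex_sub_last K (ltn_ord i))|]; rewrite ?mulr0 // (negbTE c_last).
- by rewrite xE sum_induced_weight.
Qed.

Lemma K2simplex_head_sub C a s k : K2simplex C -> List.In s C -> in_cell s a ->
  (k < size C)%N -> nth set0 (nth [::] C k) 0 `<=` a.
Proof.
move=> K /InP sC sa kC; have sCs : (index s C < size C)%N by rewrite index_mem.
have Ks : K1simplex s by rewrite -(nth_index [::] sC); apply: K2simplex_nth.
have Kk := K2simplex_nth K kC.
have [sk|ks] := leqP (index s C) k.
  have sub : {subset s <= nth [::] C k}.
    by rewrite -{1}(nth_index [::] sC); apply: (K2simplex_sub K); rewrite sk.
  apply: subset_trans (strict_chain_head (K1simplex_chain Kk) (sub _ (K1simplex_head Ks))) _.
  exact/sa/InP/K1simplex_head.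
have sub : {subset nth [::] C k <= s}.
  by rewrite -[s in {subset _ <= s}](nth_index [::] sC); apply: (K2simplex_sub K); rewrite (ltnW ks).
exact/sa/InP/sub/K1simplex_head.
Qed.

Lemma K2simplex_drop C k : K2simplex C -> (k < size C)%N -> K2simplex (drop k C).
Proof.
move=> [_ [K1 H]] kC; split; [|split].
- by move/(congr1 size); rewrite size_drop => /eqP; rewrite subn_eq0 leqNgt kC.
- by move=> s /InP /mem_drop /InP /K1.
- move=> i j /andP[ij]; rewrite size_drop !nth_drop => jC; apply: H.
  by rewrite ltn_add2l ij -ltn_subRL.
Qed.

Lemma K2simplex_cons C e : K2simplex C -> e \in nth [::] C 0 ->
  ~ {subset nth [::] C 0 <= [:: e]} -> K2simplex ([:: e] :: C).
Proof.
move=> K eC0 not_sub; have [_ [K1 H]] := K; have C_gt0 := K2simplex_size K.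
have ce : cellV1 e by have [_ [+ _]] := K2simplex_nth K C_gt0; apply; apply/InP.
split=> //; split.
  move=> s /= [<-|]; last exact: K1.
  split=> //; split=> [a [<-|]//|i j /andP[ij]].
  by rewrite ltnS leqn0 => /eqP j0; rewrite j0 in ij.
case=> [|i] [|j] //=; rewrite ltnS => ij; last exact: H.
have sub0 : {subset nth [::] C 0 <= nth [::] C j} by apply: (K2simplex_sub K).
split=> [a [<-|//] | sub]; first exact/InP/sub0.
by apply: not_sub => c /sub0 /InP /sub /InP.
Qed.

Lemma hull_coords_drop C t x k : hull_coords C t x -> (k <= size C)%N ->
  (forall i, (i < k)%N -> t i = 0) -> hull_coords (drop k C) (fun i => t (k + i)%N) x.
Proof.
move=> [t0 t1 xE] kC t_lt; split=> //.
  by rewrite size_drop -t1 (sumr_ord_drop kC t_lt).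
rewrite xE size_drop (sumr_ord_drop (F := fun i => t i *: bary1 b (nth [::] C i)) kC).
  by apply: eq_bigr => i _; rewrite nth_drop.
by move=> i ik; rewrite t_lt ?scale0r.
Qed.

Lemma hull_coords_cons C t x s : hull_coords C t x ->
  hull_coords (s :: C) (fun i => if i is j.+1 then t j else 0) x.
Proof.
case=> t0 t1 xE; split; first by case.
  by rewrite /= big_ord_recl add0r.
by rewrite /= big_ord_recl scale0r add0r.
Qed.

Lemma Nbhd_first_head C t x a k : K2simplex C -> hull_coords C t x ->
  first_pos t (size C) k -> nth set0 (nth [::] C k) 0 `<=` a -> Nbhd b a x.
Proof.
move=> K hx [kC _ t_lt] ea; set d := nth [::] C k; set e := nth set0 d 0 in ea.
have Kd := K2simplex_drop K kC; have hd := hull_coords_drop hx (ltnW kC) t_lt.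
have dE : drop k C = d :: drop k.+1 C by rewrite (drop_nth [::]).
apply/NbhdE; have [sub|not_sub] := EM {subset d <= [:: e]}.
  exists (drop k C), (fun i => t (k + i)%N); split=> //.
  by exists d; [rewrite dE; left | move=> c /InP /sub; rewrite inE => /eqP ->].
exists ([:: e] :: drop k C), (fun i => if i is j.+1 then t (k + j)%N else 0).
split; last exact: hull_coords_cons.
  by apply: K2simplex_cons; rewrite // dE //=; apply: K1simplex_head; apply: K2simplex_nth.
by exists [:: e]; [left | move=> c [<-|]].
Qed.

Lemma hull_coords_first_pos C t x : hull_coords C t x ->
  exists k, first_pos t (size C) k.
Proof. by case=> t0 t1 _; apply: exists_first_pos t0 _; rewrite t1 oner_neq0. Qed.

Lemma induced_weight_maxP C t k c : K2simplex C -> (forall i, 0 <= t i) ->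
  first_pos t (size C) k ->
  c \in nth [::] C k <-> forall c', induced_weight C t c' <= induced_weight C t c.
Proof.
move=> K t0 [kC tk t_lt].
have inv_ge0 i : 0 <= (size (nth [::] C i))%:R^-1 :> R by rewrite invr_ge0.
pose w_max := \sum_(i < size C) t i * (size (nth [::] C i))%:R^-1.
have w_le c' : induced_weight C t c' <= w_max.
  by apply: ler_sum => i _; apply: ler_wpM2l => //; case: ifP.
have w_in c' : c' \in nth [::] C k -> induced_weight C t c' = w_max.
  move=> c'k; apply: eq_bigr => i _; have [ik|ki] := ltnP i k.
    by rewrite t_lt ?mul0r.
  have c'i : c' \in nth [::] C i by apply: (K2simplex_sub K) c'k; rewrite ki /=.
  by rewrite c'i.
have w_out c' : c' \notin nth [::] C k -> induced_weight C t c' < w_max.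
  move=> c'k; rewrite /induced_weight (bigD1 (Ordinal kC)) //= (negbTE c'k).
  rewrite [w_max](bigD1 (Ordinal kC)) //=.
  apply: ltr_leD; last by apply: ler_sum => i _; apply: ler_wpM2l => //; case: ifP.
  rewrite mulr0 mulr_gt0 // invr_gt0 ltr0n.
  exact: K1simplex_size (K2simplex_nth K kC).
split=> [/w_in -> // | w_ge]; apply/negPn/negP => /w_out.
by rewrite ltNge -(w_in _ (K1simplex_head (K2simplex_nth K kC))) w_ge.
Qed.

Lemma first_pos_chain_eq C1 t1 C2 t2 x k1 k2 :
  K2simplex C1 -> hull_coords C1 t1 x -> first_pos t1 (size C1) k1 ->
  K2simplex C2 -> hull_coords C2 t2 x -> first_pos t2 (size C2) k2 ->
  nth [::] C1 k1 =i nth [::] C2 k2.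
Proof.
move=> K1 h1 f1 K2 h2 f2; have [t1_ge0 _ _] := h1; have [t2_ge0 _ _] := h2.
have [bx1 S1] := barycentric_induced K1 h1; have [bx2 S2] := barycentric_induced K2 h2.
have /funext wE := barycentric_unique bx1 bx2 (etrans S1 (esym S2)).
move=> c; apply/idP/idP.
  by move/(induced_weight_maxP _ K1 t1_ge0 f1); rewrite wE => /(induced_weight_maxP _ K2 t2_ge0 f2).
by move/(induced_weight_maxP _ K2 t2_ge0 f2); rewrite -wE => /(induced_weight_maxP _ K1 t1_ge0 f1).
Qed.

Lemma Nbhd_setI a1 a2 : Nbhd b a1 `&` Nbhd b a2 `<=` Nbhd b (a1 `&` a2).
Proof.
move=> x [/NbhdE[C1 [t1 [K1 [s1 s1C s1a] h1]]] /NbhdE[C2 [t2 [K2 [s2 s2C s2a] h2]]]].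
have [k1 f1] := hull_coords_first_pos h1; have [k2 f2] := hull_coords_first_pos h2.
have [k1C _ _] := f1; have [k2C _ _] := f2.
apply: (Nbhd_first_head K1 h1 f1); rewrite subsetI; split; first exact: K2simplex_head_sub K1 s1C s1a k1C.
apply: subset_trans (K2simplex_head_sub K2 s2C s2a k2C).
apply: strict_chain_head (K1simplex_chain (K2simplex_nth K1 k1C)) _.
by rewrite (first_pos_chain_eq K1 h1 f1 K2 h2 f2) (K1simplex_head (K2simplex_nth K2 k2C)).
Qed.

Lemma Nbhd_mono a a' : a `<=` a' -> Nbhd b a `<=` Nbhd b a'.
Proof.
move=> aa' x [C [K [[s [sC sa]] hx]]]; exists C; split=> //; split=> //.
by exists s; split=> // c cs; apply: subset_trans (sa c cs) aa'.
Qed.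

End SecondSubdivision.

Lemma relint_mono (R : realType) (N N' : set 'M[R]_4) : N `<=` N' -> relint N `<=` relint N'.
Proof.
by move=> NN' x [Nx [e [e_gt0 Ne]]]; split; [exact: NN' | exists e; split=> // y Vy /Ne /NN'; apply].
Qed.

Lemma relint_setI (R : realType) (N N' : set 'M[R]_4) :
  relint N `&` relint N' `<=` relint (N `&` N').
Proof.
move=> x [[Nx [e [e_gt0 Ne]]] [N'x [e' [e'_gt0 N'e']]]]; split=> //.
exists (Num.min e e'); split=> [|y Vy y_near]; first by rewrite lt_min e_gt0.
by split; [apply: Ne | apply: N'e'] => // i j; have := y_near i j; rewrite lt_min => /andP[].
Qed.

Theorem lemma3p5 (R : realType) (b : set 'M[R]_4 -> 'M[R]_4)
  (hb : forall a, cellV1 a -> opencell a (b a))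
  (a1 a2 : set 'M[R]_4) :
  cellV1 a1 -> cellV1 a2 -> a1 <> a2 -> cellV1 (a1 `&` a2) ->
  Nint b a1 `&` Nint b a2 = Nint b (a1 `&` a2).
Proof.
(* The identity holds for any two sets [a1], [a2]. *)
move=> _ _ _ _; apply/seteqP; split.
  by move=> x /relint_setI; apply: relint_mono; apply: Nbhd_setI.
by move=> x Nx; split; apply: relint_mono Nx; apply: Nbhd_mono => y [].
Qed.
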